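(* Let $m$ be a positive integer and let $d(m)$ denote the number of positive divisors of $m$. Let $b_1,\ldots,b_m$ be complex numbers satisfying $$\sum_{k=1}^{m} b_k\, k^{r}=0\qquad\text{for every integer } r \text{ with } 0\le r\le d(m)-1 .$$ Define $$Z_m(s)=\sum_{n=0}^{\infty}\ \sum_{k=1}^{m}\frac{b_k}{(mn+k)^s},$$ where the series is summed over $n$, each inner sum over $k=1,\ldots,m$ being taken in full. Then this series over $n$ converges for every complex $s$ with $\operatorname{Re}(s)>2-d(m)$, and $Z_m(s)$ is analytic in the half-plane $\operatorname{Re}(s)>2-d(m)$.
   Context: For $x>0$ and complex $s$, $x^{-s}=e^{-s\log x}$ with the real logarithm. $d(m)$ is the number of positive integer divisors of $m$. *)

From Stdlib Require Import Reals Lra Lia List.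
From Coquelicot Require Import Coquelicot.
Import ListNotations.
Open Scope R_scope.

Definition ndivisors (m : nat) : nat :=
  length (filter (fun k => Nat.eqb (Nat.modulo m k) 0) (List.seq 1 m)).

Definition cexp (z : C) : C :=
  (exp (Re z) * cos (Im z), exp (Re z) * sin (Im z)).

Definition cpow_neg (x : R) (s : C) : C := cexp (Copp s * RtoC (ln x))%C.

Definition Zterm (m : nat) (b : nat -> C) (s : C) (n : nat) : C :=
  sum_n_m (fun k => (b k * cpow_neg (INR (m * n + k)) s)%C) 1 m.

(* Each block of Z_m is sum_k b_k f(mn + k) with f(t) = t^(-s).  Expanding f(mn + k) by
   Taylor's formula at mn to order d(m) - 1, the vanishing moments sum_k b_k k^r = 0 annihilate
   the Taylor polynomial, so the block is bounded by the Lagrange remainder, of size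
   (mn)^(-Re s - d(m)) = O(n^-2) when Re s > 2 - d(m).  The same cancellation bounds the
   difference quotients (t^(-s-h) - t^(-s)) / h uniformly for small h, and Tannery's theorem then
   lets the series be differentiated termwise. *)

From Stdlib Require Import Reals Lra Lia Factorial.
From Coquelicot Require Import Coquelicot.
Open Scope R_scope.

(* Equalities produced by Coquelicot's generic sum lemmas are stated in [AbelianMonoid.sort C]. *)
Ltac ring_C := match goal with |- ?a = ?b => change (@eq C a b); ring end.

Lemma exp_le (x y : R) : x <= y -> exp x <= exp y.
Proof.
  intros H; destruct (Rle_lt_or_eq_dec _ _ H) as [Hlt| ->]; [|lra].
  apply Rlt_le, exp_increasing, Hlt.
Qed.

Lemma ln_nonneg (x : R) : 1 <= x -> 0 <= ln x.
Proof. intros H; rewrite <- ln_1; apply ln_le; lra. Qed.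

Lemma Rle_of_le_plus_mul (a b c d : R) :
  0 < d -> (forall e, 0 < e < d -> a <= b + e * c) -> a <= b.
Proof.
  intros Hd H. apply Rle_plus_epsilon; intros eps Heps.
  set (e := Rmin (d / 2) (eps / (Rabs c + 1))).
  assert (He : 0 < e) by (apply Rmin_pos; [lra|]; apply Rdiv_lt_0_compat; [lra|];
                          pose proof (Rabs_pos c); lra).
  assert (Hed : e <= d / 2) by apply Rmin_l.
  assert (Hee : e * (Rabs c + 1) <= eps).
  { assert (e <= eps / (Rabs c + 1)) by apply Rmin_r.
    pose proof (Rabs_pos c).
    apply (Rmult_le_compat_r (Rabs c + 1)) in H0; [|lra].
    unfold Rdiv in H0; rewrite Rmult_assoc, Rinv_l in H0; lra. }
  specialize (H e ltac:(lra)). pose proof (Rle_abs c). nra.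
Qed.

Lemma cexp_add (a b : C) : cexp (a + b)%C = (cexp a * cexp b)%C.
Proof.
  unfold cexp; destruct a as [a1 a2], b as [b1 b2]; simpl.
  rewrite exp_plus, cos_plus, sin_plus.
  apply injective_projections; simpl; ring.
Qed.

Lemma Cmod_cexp (z : C) : Cmod (cexp z) = exp (Re z).
Proof.
  unfold cexp, Cmod; simpl.
  replace (exp (Re z) * cos (Im z) * (exp (Re z) * cos (Im z) * 1) +
           exp (Re z) * sin (Im z) * (exp (Re z) * sin (Im z) * 1))
    with (exp (Re z) ^ 2 * (sin (Im z) ^ 2 + cos (Im z) ^ 2)) by ring.
  rewrite <- !Rsqr_pow2, sin2_cos2, Rmult_1_r, Rsqr_pow2.
  apply sqrt_pow2, Rlt_le, exp_pos.
Qed.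

Lemma cexp_0 : cexp 0%C = 1%C.
Proof.
  unfold cexp; simpl; rewrite exp_0, cos_0, sin_0.
  apply injective_projections; simpl; ring.
Qed.

Lemma cpow_neg_add (t : R) (a b : C) :
  cpow_neg t (a + b)%C = (cpow_neg t a * cpow_neg t b)%C.
Proof. unfold cpow_neg; rewrite <- cexp_add; f_equal; ring. Qed.

Lemma Cmod_cpow_neg (t : R) (w : C) : Cmod (cpow_neg t w) = exp (- Re w * ln t).
Proof. unfold cpow_neg; rewrite Cmod_cexp; f_equal; destruct w; simpl; ring. Qed.

Lemma cpow_neg_1 (t : R) : 0 < t -> cpow_neg t 1%C = RtoC (/ t).
Proof.
  intros Ht. unfold cpow_neg, cexp, RtoC; simpl.
  replace (- (1) * ln t - - 0 * 0) with (- ln t) by ring.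
  replace (- (1) * 0 + - 0 * ln t) with 0 by ring.
  rewrite cos_0, sin_0, Rmult_1_r, Rmult_0_r, exp_Ropp, exp_ln; auto.
Qed.

(* The modulus of [z] is its largest real projection, attained at [c = conj z / |z|]. *)
Lemma Cmod_le_of_Re (z : C) (B : R) :
  (forall c : C, Cmod c = 1 -> Re (c * z) <= B) -> Cmod z <= B.
Proof.
  intros HB.
  destruct (Ceq_dec z 0) as [-> | Hz].
  - rewrite Cmod_0. specialize (HB 1%C Cmod_1). simpl in HB; lra.
  - assert (Hm : 0 < Cmod z) by now apply Cmod_gt_0.
    assert (Hsq : Cmod z ^ 2 = Re z ^ 2 + Im z ^ 2).
    { unfold Cmod; rewrite pow2_sqrt; [unfold Re, Im; ring|].
      apply Rplus_le_le_0_compat; apply pow2_ge_0. }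
    specialize (HB (Re z / Cmod z, - Im z / Cmod z)).
    unfold Cmod at 1 in HB; simpl in HB.
    replace (Re z / Cmod z * (Re z / Cmod z * 1) + - Im z / Cmod z * (- Im z / Cmod z * 1))
      with ((Re z ^ 2 + Im z ^ 2) / Cmod z ^ 2) in HB by (unfold Re, Im; field; lra).
    rewrite <- Hsq in HB.
    replace (Cmod z ^ 2 / Cmod z ^ 2) with 1 in HB by (field; lra).
    rewrite sqrt_1 in HB.
    replace (Re z / Cmod z * fst z - - Im z / Cmod z * snd z) with (Cmod z) in HB.
    + now apply HB.
    + transitivity ((Re z ^ 2 + Im z ^ 2) / Cmod z); [rewrite <- Hsq; field; lra|].
      unfold Re, Im; field; lra.
Qed.

Lemma Re_mul_sum_n_m (c : C) (a : nat -> C) (p q : nat) :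
  Re (c * sum_n_m a p q)%C = sum_n_m (fun k => Re (c * a k)%C) p q.
Proof.
  destruct (Nat.le_gt_cases p q) as [Hpq|Hqp].
  - induction Hpq as [|q Hpq IH].
    + now rewrite !sum_n_n.
    + rewrite !sum_n_Sm by lia. rewrite <- IH. unfold plus; simpl. ring.
  - rewrite !sum_n_m_zero by lia. unfold zero; simpl. ring.
Qed.

Lemma sum_n_m_le_loc (a b : nat -> R) (p q : nat) :
  (forall k, (p <= k <= q)%nat -> a k <= b k) -> sum_n_m a p q <= sum_n_m b p q.
Proof.
  intros H. rewrite (sum_n_m_ext_loc a (fun k => Rmin (a k) (b k))).
  - apply sum_n_m_le; intros k; apply Rmin_r.
  - intros k Hk; rewrite Rmin_left; auto.
Qed.

Lemma Cmod_sum_n_m_le (a : nat -> C) (B : nat -> R) (p q : nat) :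
  (forall k, (p <= k <= q)%nat -> Cmod (a k) <= B k) -> Cmod (sum_n_m a p q) <= sum_n_m B p q.
Proof.
  intros H. eapply Rle_trans; [apply (norm_sum_n_m (K := C_AbsRing) (V := C_NormedModule))|].
  now apply sum_n_m_le_loc.
Qed.

Lemma Cmult_sum_n_m (c : C) (a : nat -> C) (p q : nat) :
  (c * sum_n_m a p q)%C = sum_n_m (fun k => c * a k)%C p q.
Proof. symmetry; exact (sum_n_m_mult_l (K := C_Ring) c a p q). Qed.

Lemma Cplus_sum_n_m (a b : nat -> C) (p q : nat) :
  sum_n_m (fun k => a k + b k)%C p q = (sum_n_m a p q + sum_n_m b p q)%C.
Proof. exact (sum_n_m_plus (G := C_AbelianMonoid) a b p q). Qed.

(** * Chains of derivatives and Taylor's formula *)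

(* [F (S j)] is the derivative of [F j] on [(a0, +oo)], expressed through all real projections
   [Re (c * F j)] so that the real Taylor-Lagrange theorem applies. *)
Definition deriv_chain (a0 : R) (F : nat -> R -> C) : Prop :=
  forall (c : C) (j : nat) (t : R), a0 < t ->
    is_derive (fun u => Re (c * F j u)) t (Re (c * F (S j) t)).

Lemma deriv_chain_ext (a0 : R) (F G : nat -> R -> C) :
  (forall j t, F j t = G j t) -> deriv_chain a0 F -> deriv_chain a0 G.
Proof.
  intros E HF c j t Ht. rewrite <- E.
  apply (is_derive_ext (fun u => Re (c * F j u))); [intros u; now rewrite E|].
  now apply HF.
Qed.

Lemma deriv_chain_comb (a0 : R) (F G : nat -> R -> C) (c1 c2 : C) :
  deriv_chain a0 F -> deriv_chain a0 G ->
  deriv_chain a0 (fun j t => c1 * F j t + c2 * G j t)%C.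
Proof.
  intros HF HG c j t Ht.
  replace (Re (c * (c1 * F (S j) t + c2 * G (S j) t)))
    with (Re (c * c1 * F (S j) t) + Re (c * c2 * G (S j) t)) by (simpl; ring).
  apply (is_derive_ext (fun u => Re (c * c1 * F j u) + Re (c * c2 * G j u)));
    [intros u; simpl; ring|].
  apply (is_derive_plus (fun u => Re (c * c1 * F j u)) (fun u => Re (c * c2 * G j u)));
    [apply HF | apply HG]; exact Ht.
Qed.

Lemma Derive_n_of_chain (f : nat -> R -> R) (a0 : R) :
  (forall j t, a0 < t -> is_derive (f j) t (f (S j) t)) ->
  forall j t, a0 < t -> ex_derive_n (f 0%nat) j t /\ Derive_n (f 0%nat) j t = f j t.
Proof.
  intros Hf j; induction j as [|j IH]; intros t Ht; [split; reflexivity|].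
  assert (Hloc : locally t (fun u => f j u = Derive_n (f 0%nat) j u)).
  { eapply filter_imp; [|apply (open_gt a0 t Ht)].
    intros u Hu; symmetry; apply IH, Hu. }
  split; simpl.
  - apply (ex_derive_ext_loc (f j)); [exact Hloc|]. eexists; apply Hf, Ht.
  - rewrite <- (Derive_ext_loc _ _ _ Hloc). apply is_derive_unique, Hf, Ht.
Qed.

Lemma deriv_chain_taylor (a0 : R) (F : nat -> R -> C) (n : nat) (x y M : R) :
  deriv_chain a0 F -> a0 < x < y ->
  (forall t, x <= t <= y -> Cmod (F (S n) t) <= M) ->
  Cmod (F 0%nat y - sum_n (fun j => RtoC ((y - x) ^ j / INR (fact j)) * F j x) n)%C
    <= (y - x) ^ S n / INR (fact (S n)) * M.
Proof.
  intros HF [Hax Hxy] HM.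
  apply Cmod_le_of_Re; intros c Hc.
  set (f := fun j u => Re (c * F j u)).
  assert (Hf : forall j t, a0 < t -> is_derive (f j) t (f (S j) t)) by apply HF.
  destruct (Taylor_Lagrange (f 0%nat) n x y Hxy) as [z [Hz Ez]].
  { intros t Ht j _; apply (Derive_n_of_chain f a0 Hf); lra. }
  rewrite (proj2 (Derive_n_of_chain f a0 Hf (S n) z ltac:(lra))) in Ez.
  replace (Re (c * (F 0%nat y - sum_n (fun j => RtoC ((y - x) ^ j / INR (fact j)) * F j x) n))%C)
    with (f 0%nat y - sum_n (fun j => (y - x) ^ j / INR (fact j) * f j x) n).
  - rewrite sum_n_Reals.
    erewrite sum_eq by (intros j _; rewrite <- (proj2 (Derive_n_of_chain f a0 Hf j x Hax));
                        reflexivity).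
    rewrite Ez; ring_simplify.
    assert (Hfact : 0 < INR (fact (S n))) by apply INR_fact_lt_0.
    assert (Hpow : 0 <= (y - x) ^ S n / INR (fact (S n)))
      by (apply Rdiv_le_0_compat; [apply pow_le|]; lra).
    apply Rmult_le_compat_l; [exact Hpow|].
    apply Rle_trans with (Cmod (c * F (S n) z)); [apply Rle_trans with (1 := Rle_abs _), re_le_Cmod|].
    rewrite Cmod_mult, Hc, Rmult_1_l; apply HM; lra.
  - replace (Re (c * (F 0%nat y - sum_n (fun j => RtoC ((y - x) ^ j / INR (fact j)) * F j x) n))%C)
      with (f 0%nat y - Re (c * sum_n (fun j => RtoC ((y - x) ^ j / INR (fact j)) * F j x) n)%C)
      by (unfold f; simpl; ring).
    unfold sum_n; rewrite Re_mul_sum_n_m.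
    apply f_equal, sum_n_m_ext; intros j; unfold f; simpl; ring.
Qed.

Definition cexp_chain (u : C) (j : nat) (t : R) : C := (pow_n u j * cexp (RtoC t * u))%C.

Lemma deriv_chain_cexp (a0 : R) (u : C) : deriv_chain a0 (cexp_chain u).
Proof.
  intros c j t _. unfold cexp_chain.
  apply (is_derive_ext (fun t => Re (c * pow_n u j * cexp (RtoC t * u))%C));
    [intros s; now rewrite Cmult_assoc|].
  replace (Re (c * (pow_n u (S j) * cexp (RtoC t * u)))%C)
    with (Re (c * pow_n u j * u * cexp (RtoC t * u))%C)
    by (simpl pow_n; change mult with Cmult; f_equal; ring).
  set (c' := (c * pow_n u j)%C). clearbody c'.
  destruct c' as [c1 c2], u as [u1 u2]; unfold cexp; simpl.
  auto_derive; [auto|]. unfold Rminus; ring.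
Qed.

Lemma Cmod_cexp_taylor (n : nat) (u : C) :
  Cmod (cexp u - sum_n (fun j => RtoC (/ INR (fact j)) * pow_n u j) n)%C
    <= Cmod u ^ S n / INR (fact (S n)) * exp (Cmod u).
Proof.
  replace (cexp u) with (cexp_chain u 0 1) at 1
    by (unfold cexp_chain; simpl; change one with (RtoC 1); rewrite Cmult_1_l; f_equal; ring).
  replace (sum_n (fun j => RtoC (/ INR (fact j)) * pow_n u j) n)%C
    with (sum_n (fun j => RtoC ((1 - 0) ^ j / INR (fact j)) * cexp_chain u j 0) n)%C.
  2:{ apply sum_n_ext; intros j; unfold cexp_chain.
      replace (RtoC 0 * u)%C with (RtoC 0) by ring. rewrite cexp_0.
      replace (1 - 0) with 1 by ring. rewrite pow1. unfold Rdiv. rewrite Rmult_1_l. now rewrite Cmult_1_r. }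
  replace (Cmod u ^ S n / INR (fact (S n))) with ((1 - 0) ^ S n / INR (fact (S n)) * Cmod u ^ S n)
    by (rewrite Rminus_0_r, pow1; field; apply not_0_INR, fact_neq_0).
  rewrite Rmult_assoc.
  apply (deriv_chain_taylor (-1)); [apply deriv_chain_cexp | lra |].
  intros t Ht. unfold cexp_chain. rewrite Cmod_mult, Cmod_cexp.
  apply Rmult_le_compat; [apply Cmod_ge_0 | apply Rlt_le, exp_pos | apply (abs_pow_n (K := C_AbsRing)) |].
  apply exp_le. replace (Re (RtoC t * u)%C) with (t * Re u) by (destruct u; simpl; ring).
  pose proof (re_le_Cmod u). pose proof (Rle_abs (Re u)). pose proof (Rle_abs (- Re u)).
  rewrite Rabs_Ropp in *. nra.
Qed.

Lemma Cmod_cexp_sub_1 (u : C) : Cmod (cexp u - 1)%C <= Cmod u * exp (Cmod u).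
Proof.
  pose proof (Cmod_cexp_taylor 0 u) as H.
  rewrite sum_O in H; simpl in H.
  replace (RtoC (/ 1) * one)%C with (RtoC 1) in H by (rewrite Rinv_1; symmetry; apply Cmult_1_l).
  rewrite Rmult_1_r, Rdiv_1_r in H. exact H.
Qed.

Lemma Cmod_cexp_sub_1_sub (u : C) : Cmod (cexp u - 1 - u)%C <= Cmod u ^ 2 / 2 * exp (Cmod u).
Proof.
  pose proof (Cmod_cexp_taylor 1 u) as H.
  rewrite sum_Sn, sum_O in H; simpl in H.
  replace (plus (RtoC (/ 1) * one) (RtoC (/ 1) * mult u one))%C with (RtoC 1 + u)%C in H
    by (rewrite Rinv_1; change one with (RtoC 1); unfold plus, mult; simpl; ring).
  replace (cexp u - 1 - u)%C with (cexp u - (1 + u))%C by ring.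
  replace (Cmod u ^ 2 / 2) with (Cmod u * (Cmod u * 1) / (1 + 1)) by (simpl; field).
  exact H.
Qed.

(** * Derivatives of power functions *)

Lemma is_derive_Re_cpow_neg (c w : C) (t : R) : 0 < t ->
  is_derive (fun t => Re (c * cpow_neg t w)%C) t (Re (c * (- w) * cpow_neg t (w + 1))%C).
Proof.
  intros Ht. rewrite cpow_neg_add, cpow_neg_1 by exact Ht.
  destruct c as [c1 c2], w as [w1 w2]; unfold cpow_neg, cexp; simpl.
  auto_derive; [auto|]. unfold Rminus. field. lra.
Qed.

Fixpoint cpow_deriv_coef (j : nat) (w : C) : C :=
  match j with
  | O => 1%C
  | S j => (cpow_deriv_coef j w * (- (w + RtoC (INR j))))%C
  end.

(* [cpow_chain w j] is the [j]-th derivative of [t |-> t^(-w)]. *)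
Definition cpow_chain (w : C) (j : nat) (t : R) : C :=
  (cpow_deriv_coef j w * cpow_neg t (w + RtoC (INR j)))%C.

Lemma cpow_chain_0 (w : C) (t : R) : cpow_chain w 0 t = cpow_neg t w.
Proof.
  unfold cpow_chain; simpl. rewrite Cmult_1_l. f_equal.
  apply injective_projections; simpl; ring.
Qed.

Lemma deriv_chain_cpow (w : C) : deriv_chain 0 (cpow_chain w).
Proof.
  intros c j t Ht. unfold cpow_chain.
  apply (is_derive_ext (fun u => Re (c * cpow_deriv_coef j w * cpow_neg u (w + RtoC (INR j))))%C);
    [intros u; now rewrite Cmult_assoc|].
  replace (Re (c * (cpow_deriv_coef (S j) w * cpow_neg t (w + RtoC (INR (S j)))))%C)
    with (Re (c * cpow_deriv_coef j w * (- (w + RtoC (INR j)))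
                * cpow_neg t (w + RtoC (INR j) + 1))%C).
  - now apply is_derive_Re_cpow_neg.
  - simpl cpow_deriv_coef. rewrite S_INR, RtoC_plus, Cplus_assoc. f_equal; ring.
Qed.

Lemma exp_mul_ln_le_inv_sq (a x t : R) : 1 <= x <= t -> 2 <= a -> exp (- a * ln t) <= / x ^ 2.
Proof.
  intros Hxt Ha.
  assert (E : exp (-2 * ln x) = / x ^ 2).
  { replace (-2 * ln x) with (- (ln x + ln x)) by ring.
    rewrite exp_Ropp, exp_plus, exp_ln by lra. simpl; f_equal; ring. }
  rewrite <- E. apply exp_le.
  pose proof (ln_nonneg x (proj1 Hxt)). pose proof (ln_le x t ltac:(lra) (proj2 Hxt)). nra.
Qed.

Lemma Cmod_cpow_chain_le (w : C) (j : nat) (x t : R) :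
  1 <= x <= t -> 2 <= Re w + INR j ->
  Cmod (cpow_chain w j t) <= Cmod (cpow_deriv_coef j w) / x ^ 2.
Proof.
  intros Hxt Hw. unfold cpow_chain. rewrite Cmod_mult, Cmod_cpow_neg.
  apply Rmult_le_compat_l; [apply Cmod_ge_0|]. apply exp_mul_ln_le_inv_sq; [exact Hxt|].
  exact Hw.
Qed.

Lemma cpow_deriv_coef_lipschitz (j : nat) (s : C) : exists K, 0 <= K /\
  forall h, Cmod h <= 1 ->
    Cmod (cpow_deriv_coef j (s + h)) <= K /\
    Cmod (cpow_deriv_coef j (s + h) - cpow_deriv_coef j s)%C <= K * Cmod h.
Proof.
  induction j as [|j [K [HK0 HK]]].
  - exists 1. split; [lra|]. intros h Hh. simpl. rewrite Cmod_1. split; [lra|].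
    replace (1 - 1)%C with (RtoC 0) by ring. rewrite Cmod_0. pose proof (Cmod_ge_0 h). lra.
  - set (B := Cmod s + 1 + INR j).
    assert (HB : 0 <= B) by (unfold B; pose proof (Cmod_ge_0 s); pose proof (pos_INR j); lra).
    exists (K * B + K). split; [nra|]. intros h Hh.
    destruct (HK h Hh) as [Hc Hd].
    assert (Hc0 : Cmod (cpow_deriv_coef j s) <= K).
    { destruct (HK (RtoC 0)) as [H0 _]; [rewrite Cmod_0; lra|]. now rewrite Cplus_0_r in H0. }
    assert (Hlin : Cmod (s + h + RtoC (INR j))%C <= B).
    { eapply Rle_trans; [apply Cmod_triangle|].
      eapply Rle_trans; [apply Rplus_le_compat_r, Cmod_triangle|].
      rewrite Cmod_R, Rabs_pos_eq by apply pos_INR. unfold B; lra. }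
    pose proof (Cmod_ge_0 h). pose proof (Cmod_ge_0 (cpow_deriv_coef j (s + h))).
    pose proof (Cmod_ge_0 (s + h + RtoC (INR j))%C).
    simpl cpow_deriv_coef. split.
    + rewrite Cmod_mult, Cmod_opp.
      apply Rle_trans with (K * B); [apply Rmult_le_compat; auto | nra].
    + replace (cpow_deriv_coef j (s + h) * - (s + h + RtoC (INR j))
               - cpow_deriv_coef j s * - (s + RtoC (INR j)))%C
        with ((cpow_deriv_coef j (s + h) - cpow_deriv_coef j s) * - (s + h + RtoC (INR j))
              + cpow_deriv_coef j s * - h)%C by ring.
      eapply Rle_trans; [apply Cmod_triangle|]. rewrite !Cmod_mult, !Cmod_opp.
      pose proof (Cmod_ge_0 (cpow_deriv_coef j (s + h) - cpow_deriv_coef j s)%C).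
      pose proof (Cmod_ge_0 (cpow_deriv_coef j s)).
      apply Rle_trans with (K * Cmod h * B + K * Cmod h); [|nra].
      apply Rplus_le_compat; [apply Rmult_le_compat | apply Rmult_le_compat_r]; auto.
Qed.

Lemma Cmod_cpow_neg_sub_1 (t : R) (h : C) : 1 <= t ->
  Cmod (cpow_neg t h - 1)%C <= Cmod h * ln t * exp (Cmod h * ln t).
Proof.
  intros Ht. unfold cpow_neg.
  replace (Cmod h * ln t) with (Cmod (- h * RtoC (ln t))%C).
  - apply Cmod_cexp_sub_1.
  - rewrite Cmod_mult, Cmod_opp, Cmod_R, Rabs_pos_eq; [reflexivity | now apply ln_nonneg].
Qed.

Definition cpow_dq (s h : C) (j : nat) (t : R) : C :=
  ((cpow_chain (s + h) j t - cpow_chain s j t) / h)%C.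

Lemma deriv_chain_cpow_dq (s h : C) : deriv_chain 0 (cpow_dq s h).
Proof.
  apply (deriv_chain_ext 0 (fun j t => / h * cpow_chain (s + h) j t + (- / h) * cpow_chain s j t)%C).
  - intros j t. unfold cpow_dq, Cdiv. ring.
  - apply deriv_chain_comb; apply deriv_chain_cpow.
Qed.

(* [L e^(-dL) <= 1/d] because [1 + dL <= e^(dL)]. *)
Lemma exp_neg_absorbs_log (d L : R) : 0 < d -> 0 <= L ->
  exp (- (2 * d) * L) * (L * exp (d * L) + 1) <= / d + 1.
Proof.
  intros Hd HL. pose proof (exp_ineq1_le (d * L)). pose proof (exp_pos (d * L)).
  replace (exp (- (2 * d) * L) * (L * exp (d * L) + 1))
    with (L / exp (d * L) + / exp (d * L) * / exp (d * L))
    by (replace (- (2 * d) * L) with (- (d * L + d * L)) by ring;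
        rewrite exp_Ropp, exp_plus; field; lra).
  assert (He : 1 <= exp (d * L)) by nra.
  apply Rplus_le_compat.
  - apply (Rmult_le_reg_r (exp (d * L))); [lra|].
    unfold Rdiv; rewrite Rmult_assoc, Rinv_l, Rmult_1_r by lra.
    apply (Rmult_le_reg_l d); [lra|].
    replace (d * (/ d * exp (d * L))) with (exp (d * L)) by (field; lra). lra.
  - rewrite <- Rinv_mult, <- Rinv_1. apply Rinv_le_contravar; nra.
Qed.

Lemma cpow_dq_factor (s h : C) (j : nat) (t : R) :
  cpow_dq s h j t =
  (/ h * cpow_neg t (s + RtoC (INR j)) *
   (cpow_deriv_coef j (s + h) * (cpow_neg t h - 1)
    + (cpow_deriv_coef j (s + h) - cpow_deriv_coef j s)))%C.
Proof.
  unfold cpow_dq, cpow_chain, Cdiv.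
  replace (s + h + RtoC (INR j))%C with ((s + RtoC (INR j)) + h)%C by ring.
  rewrite cpow_neg_add. ring.
Qed.

Lemma Cmod_cpow_dq_le (s h : C) (j : nat) (x t d K : R) :
  1 <= x <= t -> h <> RtoC 0 -> Cmod h <= d -> 2 + 2 * d <= Re s + INR j ->
  Cmod (cpow_deriv_coef j (s + h)) <= K ->
  Cmod (cpow_deriv_coef j (s + h) - cpow_deriv_coef j s)%C <= K * Cmod h ->
  Cmod (cpow_dq s h j t) <= K * (/ d + 1) / x ^ 2.
Proof.
  intros Hxt Hh0 Hhd Hs HK1 HK2.
  assert (Hh : 0 < Cmod h) by now apply Cmod_gt_0.
  assert (HK : 0 <= K) by (eapply Rle_trans; [apply Cmod_ge_0 | exact HK1]).
  set (L := ln t).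
  assert (HL : 0 <= L) by (apply ln_nonneg; lra).
  rewrite cpow_dq_factor.
  set (c := cpow_deriv_coef j (s + h)) in *. set (c0 := cpow_deriv_coef j s) in *.
  assert (Hsum : Cmod (c * (cpow_neg t h - 1) + (c - c0))%C
                 <= K * Cmod h * (L * exp (d * L) + 1)).
  { eapply Rle_trans; [apply Cmod_triangle|]. rewrite Cmod_mult.
    assert (Hp : Cmod (cpow_neg t h - 1)%C <= Cmod h * (L * exp (d * L))).
    { eapply Rle_trans; [apply Cmod_cpow_neg_sub_1; lra|]. fold L.
      rewrite Rmult_assoc. apply Rmult_le_compat_l; [lra|].
      apply Rmult_le_compat_l; [exact HL|]. apply exp_le; nra. }
    pose proof (Cmod_ge_0 (cpow_neg t h - 1)%C).
    apply Rle_trans with (K * (Cmod h * (L * exp (d * L))) + K * Cmod h); [|lra].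
    apply Rplus_le_compat; [apply Rmult_le_compat; auto using Cmod_ge_0 | exact HK2]. }
  assert (Hpow : Cmod (cpow_neg t (s + RtoC (INR j))) <= exp (-2 * L) * exp (- (2 * d) * L)).
  { rewrite Cmod_cpow_neg, <- exp_plus. apply exp_le. fold L.
    replace (Re (s + RtoC (INR j))) with (Re s + INR j) by reflexivity. nra. }
  rewrite !Cmod_mult, Cmod_inv by exact Hh0.
  apply Rle_trans with (K * (exp (-2 * L) * (exp (- (2 * d) * L) * (L * exp (d * L) + 1)))).
  - replace (K * (exp (-2 * L) * (exp (- (2 * d) * L) * (L * exp (d * L) + 1))))
      with (/ Cmod h * (exp (-2 * L) * exp (- (2 * d) * L)) * (K * Cmod h * (L * exp (d * L) + 1)))
      by (field; lra).
    apply Rmult_le_compat; [| apply Cmod_ge_0 | | exact Hsum].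
    + apply Rmult_le_pos; [apply Rlt_le, Rinv_0_lt_compat, Hh | apply Cmod_ge_0].
    + apply Rmult_le_compat_l; [apply Rlt_le, Rinv_0_lt_compat, Hh | exact Hpow].
  - apply Rle_trans with (K * (/ x ^ 2 * (/ d + 1))); [|right; field; lra].
    apply Rmult_le_compat_l; [exact HK|].
    apply Rmult_le_compat; [apply Rlt_le, exp_pos | | | apply exp_neg_absorbs_log; lra].
    + apply Rmult_le_pos; [apply Rlt_le, exp_pos|]. pose proof (exp_pos (d * L)). nra.
    + unfold L. apply (exp_mul_ln_le_inv_sq 2); [exact Hxt | lra].
Qed.

(** * Cancellation by vanishing moments *)

Definition moments_vanish (n m : nat) (b : nat -> C) : Prop :=
  forall r, (r <= n)%nat -> sum_n_m (fun k => (b k * RtoC (INR k ^ r))%C) 1 m = RtoC 0.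

Lemma moments_vanish_poly (n m : nat) (b : nat -> C) (c : nat -> C) :
  moments_vanish n m b ->
  sum_n_m (fun k => b k * sum_n (fun j => c j * RtoC (INR k ^ j)) n)%C 1 m = RtoC 0.
Proof.
  induction n as [|n IH]; intros Hb.
  - rewrite (sum_n_m_ext _ (fun k => c 0%nat * (b k * RtoC (INR k ^ 0)))%C)
      by (intros k; rewrite sum_O; ring_C).
    rewrite <- Cmult_sum_n_m, Hb by lia. ring_C.
  - rewrite (sum_n_m_ext _ (fun k => b k * sum_n (fun j => c j * RtoC (INR k ^ j)) n
                                  + c (S n) * (b k * RtoC (INR k ^ S n)))%C)
      by (intros k; rewrite sum_Sn; unfold plus; simpl; ring_C).
    rewrite Cplus_sum_n_m, <- Cmult_sum_n_m, IH, Hb by (auto || intros r Hr; apply Hb; lia).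
    ring_C.
Qed.

Definition moment_weight (n m : nat) (b : nat -> C) : R :=
  sum_n_m (fun k => Cmod (b k) * INR k ^ S n) 1 m.

Lemma moment_weight_nonneg (n m : nat) (b : nat -> C) : 0 <= moment_weight n m b.
Proof.
  unfold moment_weight. apply Rle_trans with (sum_n_m (fun _ => 0) 1 m).
  { rewrite sum_n_m_const, Rmult_0_r. apply Rle_refl. }
  apply sum_n_m_le_loc; intros k _.
  apply Rmult_le_pos; [apply Cmod_ge_0 | apply pow_le, pos_INR].
Qed.

Lemma moment_cancellation (n m : nat) (b : nat -> C) (F : nat -> R -> C) (x M : R) :
  moments_vanish n m b -> deriv_chain 0 F -> 0 < x ->
  (forall t, x <= t -> Cmod (F (S n) t) <= M) ->
  Cmod (sum_n_m (fun k => b k * F 0%nat (x + INR k)%R)%C 1 m) <= moment_weight n m b * M.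
Proof.
  intros Hb HF Hx HM.
  assert (HM0 : 0 <= M) by (eapply Rle_trans; [apply Cmod_ge_0 | apply (HM x); lra]).
  set (T := fun k => sum_n (fun j => RtoC ((x + INR k - x) ^ j / INR (fact j)) * F j x)%C n).
  assert (HT : sum_n_m (fun k => b k * T k)%C 1 m = RtoC 0).
  { rewrite <- (moments_vanish_poly n m b (fun j => F j x * RtoC (/ INR (fact j))))%C by exact Hb.
    apply sum_n_m_ext; intros k. unfold T. f_equal. apply sum_n_ext; intros j.
    replace (x + INR k - x) with (INR k) by ring.
    unfold Rdiv. rewrite !RtoC_mult. ring_C. }
  rewrite (sum_n_m_ext _ (fun k => b k * (F 0%nat (x + INR k)%R - T k) + b k * T k)%C)
    by (intros k; ring_C).
  rewrite Cplus_sum_n_m, HT, Cplus_0_r.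
  unfold moment_weight. rewrite <- (sum_n_m_mult_r (K := R_Ring)).
  apply Cmod_sum_n_m_le; intros k Hk. rewrite Cmod_mult. change (mult ?a ?b) with (a * b).
  rewrite Rmult_assoc. apply Rmult_le_compat_l; [apply Cmod_ge_0|].
  assert (Hk1 : 1 <= INR k) by (apply (le_INR 1); lia).
  eapply Rle_trans.
  - apply (deriv_chain_taylor 0 F n x (x + INR k) M HF ltac:(lra)); intros; apply HM; lra.
  - replace (x + INR k - x) with (INR k) by ring.
    assert (Hf : 1 <= INR (fact (S n))) by (apply (le_INR 1), lt_O_fact).
    unfold Rdiv. rewrite Rmult_assoc. apply Rmult_le_compat_l; [apply pow_le; lra|].
    rewrite <- (Rmult_1_l M) at 2. apply Rmult_le_compat_r; [exact HM0|].
    rewrite <- Rinv_1. apply Rinv_le_contravar; lra.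
Qed.

(** * Dominated series *)

Lemma sum_inv_sq_tail (p q : nat) : (1 <= p)%nat ->
  sum_n_m (fun n => / INR n ^ 2) p q <= 2 / INR p.
Proof.
  intros Hp. assert (HP : 1 <= INR p) by (apply (le_INR 1); exact Hp).
  assert (Htel : forall k, 1 <= k -> / k ^ 2 <= 2 / k - 2 / (k + 1)).
  { intros k Hk. replace (2 / k - 2 / (k + 1)) with (/ (k * (k + 1) / 2)) by (field; lra).
    apply Rinv_le_contravar; nra. }
  assert (Hd : forall d, sum_n_m (fun n => / INR n ^ 2) p (p + d) <= 2 / INR p - 2 / (INR (p + d) + 1)).
  { induction d as [|d IH].
    - rewrite Nat.add_0_r, sum_n_n. now apply Htel.
    - rewrite Nat.add_succ_r, sum_n_Sm by lia.
      assert (1 <= INR (p + d)) by (apply (le_INR 1); lia).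
      pose proof (Htel (INR (S (p + d))) ltac:(rewrite S_INR; lra)).
      change plus with Rplus. rewrite S_INR in *. lra. }
  destruct (Nat.le_gt_cases p q) as [Hpq|Hqp].
  - replace q with (p + (q - p))%nat by lia.
    eapply Rle_trans; [apply Hd|].
    assert (0 < INR (p + (q - p)) + 1) by (pose proof (pos_INR (p + (q - p))); lra).
    assert (0 <= 2 / (INR (p + (q - p)) + 1)) by (apply Rlt_le, Rdiv_lt_0_compat; lra). lra.
  - rewrite sum_n_m_zero by lia. apply Rlt_le, Rdiv_lt_0_compat; lra.
Qed.

Lemma ex_series_inv_sq : ex_series (fun n => / INR n ^ 2).
Proof.
  apply (ex_series_Cauchy (K := R_AbsRing) (V := R_CompleteNormedModule)). intros eps.
  destruct (INR_unbounded (2 / eps)) as [N HN].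
  assert (He := cond_pos eps).
  assert (HN0 : 0 < INR N) by (pose proof (Rdiv_lt_0_compat 2 eps ltac:(lra) He); lra).
  assert (HN1 : (1 <= N)%nat) by (apply INR_lt; simpl; exact HN0).
  exists N. intros p q Hp _.
  assert (HNp : INR N <= INR p) by (apply le_INR; exact Hp).
  eapply Rle_lt_trans; [apply (norm_sum_n_m (K := R_AbsRing) (V := R_NormedModule))|].
  apply Rle_lt_trans with (sum_n_m (fun n => / INR n ^ 2) p q).
  { apply sum_n_m_le_loc; intros k Hk.
    right. apply Rabs_pos_eq, Rlt_le, Rinv_0_lt_compat, pow_lt, lt_0_INR; lia. }
  apply Rle_lt_trans with (2 / INR N).
  - eapply Rle_trans; [apply sum_inv_sq_tail; lia|]. unfold Rdiv. apply Rmult_le_compat_l; [lra|]. apply Rinv_le_contravar; lra.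
  - apply (Rmult_lt_reg_r (INR N / eps)); [apply Rdiv_lt_0_compat; lra|].
    replace (2 / INR N * (INR N / eps)) with (2 / eps) by (field; lra).
    replace (eps * (INR N / eps)) with (INR N) by (field; lra). lra.
Qed.

Lemma ex_series_div_sq (K : R) : ex_series (fun n => K / INR n ^ 2).
Proof.
  apply (ex_series_ext (fun n => scal K (/ INR n ^ 2))); [reflexivity|].
  apply (ex_series_scal (K := R_AbsRing) (V := R_NormedModule)), ex_series_inv_sq.
Qed.

Lemma ex_series_of_dominated (a : nat -> C) (M : nat -> R) :
  ex_series M -> (forall n, (1 <= n)%nat -> Cmod (a n) <= M n) -> ex_series a.
Proof.
  intros HM Ha. apply ex_series_incr_1.
  apply (ex_series_le (K := C_AbsRing) (V := C_CompleteNormedModule) _ (fun n => M (S n))).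
  - intros n; apply Ha; lia.
  - now apply (ex_series_incr_1 M).
Qed.

Definition series_sum (a : nat -> C) : C :=
  @iota (CompleteNormedModule.CompleteSpace C_AbsRing C_CompleteNormedModule) (is_series a).

Lemma is_series_series_sum (a : nat -> C) : ex_series a -> is_series a (series_sum a).
Proof.
  intros [l Hl]. unfold series_sum, is_series.
  rewrite (iota_filterlim_locally (K := C_AbsRing) (V := C_CompleteNormedModule) _ l); exact Hl.
Qed.

Lemma is_series_div_sub (a a' : nat -> C) (l l' h : C) :
  is_series a' l' -> is_series a l ->
  is_series (fun n => (a' n - a n) / h)%C ((l' - l) / h)%C.
Proof.
  intros Ha' Ha.
  pose proof (is_series_scal (K := C_AbsRing) (V := C_NormedModule) (/ h)%C _ _
                (is_series_minus _ _ _ _ Ha' Ha)) as H.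
  replace ((l' - l) / h)%C with (scal (/ h)%C (plus l' (opp l))) by apply Cmult_comm.
  eapply is_series_ext; [|exact H]. intros n. apply Cmult_comm.
Qed.

Lemma Cmod_le_of_approx (z : C) (w : R -> C) (B c d : R) : 0 < d ->
  (forall e, 0 < e < d -> Cmod (w e) <= B) ->
  (forall e, 0 < e < d -> Cmod (w e - z)%C <= e * c) -> Cmod z <= B.
Proof.
  intros Hd HB Hc. apply (Rle_of_le_plus_mul _ _ c d Hd). intros e He.
  replace z with (w e - (w e - z))%C by ring.
  eapply Rle_trans; [apply Cmod_triangle|]. rewrite Cmod_opp.
  apply Rplus_le_compat; auto.
Qed.

Lemma Cmod_series_le_split (e : nat -> C) (E : C) (P : nat) (A B : R) :
  is_series e E -> Cmod (sum_n e P) <= A ->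
  (forall N, (P < N)%nat -> Cmod (sum_n_m e (S P) N) <= B) -> Cmod E <= A + B.
Proof.
  intros He HA HB.
  assert (Hl : is_lim_seq (fun N => Cmod (sum_n e N)) (Cmod E)).
  { apply (filterlim_comp _ _ _ (sum_n e) (@norm C_AbsRing C_NormedModule) eventually (locally E));
      [exact He | apply (filterlim_norm (K := C_AbsRing) (V := C_NormedModule))]. }
  refine (is_lim_seq_le_loc _ _ _ _ (ex_intro _ (S P) _) Hl (is_lim_seq_const (A + B))).
  intros N HN. cbv beta. unfold sum_n at 1. rewrite (sum_n_m_Chasles _ 0 P N) by lia.
  eapply Rle_trans; [apply Cmod_triangle|]. apply Rplus_le_compat; [exact HA | apply HB; lia].
Qed.

Lemma ex_series_tail_le (M : nat -> R) : ex_series M ->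
  forall eps, 0 < eps -> exists P, forall N, (P < N)%nat -> sum_n_m M (S P) N <= eps.
Proof.
  intros HM eps He.
  destruct (Cauchy_ex_series (K := R_AbsRing) (V := R_CompleteNormedModule) M HM
              (mkposreal eps He)) as [P HP].
  exists P. intros N HN. specialize (HP (S P) N ltac:(lia) ltac:(lia)).
  apply Rlt_le, Rle_lt_trans with (2 := HP), Rle_abs.
Qed.

Lemma tannery (q : C -> nat -> C) (Q : C -> C) (l : nat -> C) (M Cn : nat -> R) (d : R) :
  0 < d -> ex_series M ->
  (forall h, h <> RtoC 0 -> Cmod h < d -> is_series (q h) (Q h)) ->
  (forall h n, h <> RtoC 0 -> Cmod h < d -> (1 <= n)%nat -> Cmod (q h n) <= M n) ->
  (forall h n, h <> RtoC 0 -> Cmod h < d -> Cmod (q h n - l n)%C <= Cmod h * Cn n) ->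
  exists L, is_series l L /\
    forall eps, 0 < eps -> exists r, 0 < r /\
      forall h, h <> RtoC 0 -> Cmod h < r -> Cmod (Q h - L)%C <= eps.
Proof.
  intros Hd HM Hq Hqb Hql.
  assert (Hlb : forall n, (1 <= n)%nat -> Cmod (l n) <= M n).
  { intros n Hn. apply (Cmod_le_of_approx (l n) (fun e => q (RtoC e) n) (M n) (Cn n) d Hd);
      intros e He; assert (Hh0 : RtoC e <> RtoC 0) by (intros H; apply RtoC_inj in H; lra).
    - apply Hqb; auto. rewrite Cmod_R, Rabs_pos_eq; lra.
    - specialize (Hql (RtoC e) n Hh0). rewrite Cmod_R, Rabs_pos_eq in Hql by lra.
      apply Hql; lra. }
  exists (series_sum l). split.
  { apply is_series_series_sum, (ex_series_of_dominated l M HM Hlb). }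
  intros eps He.
  destruct (ex_series_tail_le M HM (eps / 4) ltac:(lra)) as [P HP].
  set (C0 := sum_n (fun n => Rabs (Cn n)) P).
  assert (HC0 : 0 <= C0).
  { unfold C0. rewrite sum_n_Reals. apply cond_pos_sum; intros; apply Rabs_pos. }
  exists (Rmin d (eps / 2 / (C0 + 1))). split.
  { apply Rmin_pos; [exact Hd | apply Rdiv_lt_0_compat; lra]. }
  intros h Hh0 Hhr.
  assert (Hhd : Cmod h < d) by (eapply Rlt_le_trans; [exact Hhr | apply Rmin_l]).
  assert (Hhe : Cmod h * (C0 + 1) <= eps / 2).
  { apply (Rmult_le_reg_r (/ (C0 + 1))); [apply Rinv_0_lt_compat; lra|].
    rewrite Rmult_assoc, Rinv_r, Rmult_1_r by lra.
    apply Rlt_le; eapply Rlt_le_trans; [exact Hhr | apply Rmin_r]. }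
  replace eps with (eps / 2 + eps / 2) by field.
  apply (Cmod_series_le_split (fun n => q h n - l n)%C _ P).
  { exact (is_series_minus (K := C_AbsRing) (V := C_NormedModule) _ _ _ _ (Hq h Hh0 Hhd)
             (is_series_series_sum l (ex_series_of_dominated l M HM Hlb))). }
  - eapply Rle_trans.
    + apply (Cmod_sum_n_m_le _ (fun n => Cmod h * Rabs (Cn n))); intros n _.
      eapply Rle_trans; [apply Hql; auto|].
      apply Rmult_le_compat_l; [apply Cmod_ge_0 | apply Rle_abs].
    + rewrite (sum_n_m_mult_l (K := R_Ring)). change (Cmod h * C0 <= eps / 2).
      pose proof (Cmod_ge_0 h). nra.
  - intros N HN. eapply Rle_trans.
    + apply (Cmod_sum_n_m_le _ (fun n => 2 * M n)); intros n Hn.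
      replace (q h n - l n)%C with (q h n + - l n)%C by ring.
      eapply Rle_trans; [apply Cmod_triangle|]. rewrite Cmod_opp.
      pose proof (Hqb h n Hh0 Hhd ltac:(lia)). pose proof (Hlb n ltac:(lia)). lra.
    + rewrite (sum_n_m_mult_l (K := R_Ring)).
      change (2 * sum_n_m M (S P) N <= eps / 2). specialize (HP N HN). lra.
Qed.

Lemma is_derive_of_quotients (f : C -> C) (s L : C) :
  (forall eps, 0 < eps -> exists r, 0 < r /\
     forall h, h <> RtoC 0 -> Cmod h < r -> Cmod ((f (s + h) - f s) / h - L)%C <= eps) ->
  @is_derive C_AbsRing C_NormedModule f s L.
Proof.
  intros Hq. split; [apply is_linear_scal_l|].
  intros x Hx.
  apply (is_filter_lim_locally_unique (K := C_AbsRing) (V := AbsRing_NormedModule C_AbsRing)) in Hx.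
  subst x. intros eps.
  apply (locally_le_locally_norm (K := C_AbsRing) (V := AbsRing_NormedModule C_AbsRing)).
  destruct (Hq eps (cond_pos eps)) as [r [Hr Hrh]].
  exists (mkposreal r Hr). intros y Hy. change C in y.
  change (Cmod ((f y - f s) - (y - s) * L)%C <= eps * Cmod (y - s)%C).
  change (Cmod (y - s)%C < r) in Hy.
  set (h := (y - s)%C) in *.
  assert (Ey : @eq C y (s + h)%C) by (unfold h; ring). clearbody h. subst y.
  destruct (Ceq_dec h (RtoC 0)) as [-> | Hh0].
  - rewrite Cplus_0_r.
    replace (f s - f s - RtoC 0 * L)%C with (RtoC 0) by ring.
    rewrite Cmod_R, Rabs_R0, Rmult_0_r. apply Rle_refl.
  - replace (f (s + h) - f s - h * L)%C with (h * ((f (s + h) - f s) / h - L))%C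
      by (field; exact Hh0).
    rewrite Cmod_mult, Rmult_comm. apply Rmult_le_compat_r; [apply Cmod_ge_0|].
    now apply Hrh.
Qed.

(** * The series Z_m *)

Lemma Zterm_as_block (m : nat) (b : nat -> C) (s : C) (n : nat) :
  Zterm m b s n = sum_n_m (fun k => b k * cpow_chain s 0 (INR (m * n) + INR k)%R)%C 1 m.
Proof.
  unfold Zterm. apply sum_n_m_ext; intros k. now rewrite cpow_chain_0, plus_INR.
Qed.

Lemma Zterm_dq_as_block (m : nat) (b : nat -> C) (s h : C) (n : nat) :
  ((Zterm m b (s + h) n - Zterm m b s n) / h)%C =
  sum_n_m (fun k => b k * cpow_dq s h 0 (INR (m * n) + INR k)%R)%C 1 m.
Proof.
  transitivity (/ h * Zterm m b (s + h) n + (- / h) * Zterm m b s n)%C; [unfold Cdiv; ring|].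
  unfold Zterm. rewrite !Cmult_sum_n_m, <- Cplus_sum_n_m.
  apply sum_n_m_ext; intros k. unfold cpow_dq. rewrite !cpow_chain_0, plus_INR.
  unfold Cdiv. ring_C.
Qed.

Lemma INR_le_mul (m n : nat) : (0 < m)%nat -> (1 <= n)%nat -> 1 <= INR n <= INR (m * n).
Proof. intros Hm Hn. split; [apply (le_INR 1); exact Hn | apply le_INR; nia]. Qed.

Lemma div_sq_le (a x y : R) : 0 <= a -> 1 <= y <= x -> a / x ^ 2 <= a / y ^ 2.
Proof.
  intros Ha Hyx. unfold Rdiv. apply Rmult_le_compat_l; [exact Ha|].
  apply Rinv_le_contravar; [apply pow_lt; lra | apply pow_incr; lra].
Qed.

Lemma Zterm_bound (n0 m : nat) (b : nat -> C) (s : C) :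
  (0 < m)%nat -> moments_vanish n0 m b -> 2 <= Re s + INR (S n0) ->
  exists K, forall n, (1 <= n)%nat -> Cmod (Zterm m b s n) <= K / INR n ^ 2.
Proof.
  intros Hm Hb Hs.
  set (c := Cmod (cpow_deriv_coef (S n0) s)).
  exists (moment_weight n0 m b * c). intros n Hn.
  pose proof (INR_le_mul m n Hm Hn) as Hx.
  rewrite Zterm_as_block.
  eapply Rle_trans.
  - apply (moment_cancellation n0 m b (cpow_chain s) _ (c / INR (m * n) ^ 2) Hb);
      [apply deriv_chain_cpow | lra |].
    intros t Ht. apply Cmod_cpow_chain_le; [lra | exact Hs].
  - unfold Rdiv. rewrite <- Rmult_assoc. apply div_sq_le; [|exact Hx].
    apply Rmult_le_pos; [apply moment_weight_nonneg | apply Cmod_ge_0].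
Qed.

Lemma Zterm_dq_bound (n0 m : nat) (b : nat -> C) (s : C) (d : R) :
  (0 < m)%nat -> moments_vanish n0 m b -> 0 < d <= 1 -> 2 + 2 * d <= Re s + INR (S n0) ->
  exists K, forall h n, h <> RtoC 0 -> Cmod h <= d -> (1 <= n)%nat ->
    Cmod ((Zterm m b (s + h) n - Zterm m b s n) / h)%C <= K / INR n ^ 2.
Proof.
  intros Hm Hb Hd Hs.
  destruct (cpow_deriv_coef_lipschitz (S n0) s) as [Kc [HKc0 HKc]].
  exists (moment_weight n0 m b * (Kc * (/ d + 1))). intros h n Hh0 Hhd Hn.
  pose proof (INR_le_mul m n Hm Hn) as Hx.
  destruct (HKc h ltac:(lra)) as [HK1 HK2].
  rewrite Zterm_dq_as_block.
  eapply Rle_trans.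
  - apply (moment_cancellation n0 m b (cpow_dq s h) _ (Kc * (/ d + 1) / INR (m * n) ^ 2) Hb);
      [apply deriv_chain_cpow_dq | lra |].
    intros t Ht. apply (Cmod_cpow_dq_le s h (S n0) (INR (m * n)) t d Kc); auto; lra.
  - unfold Rdiv. rewrite <- Rmult_assoc. apply div_sq_le; [|exact Hx].
    apply Rmult_le_pos; [apply moment_weight_nonneg|].
    apply Rmult_le_pos; [exact HKc0|]. pose proof (Rinv_0_lt_compat d ltac:(lra)). lra.
Qed.

Definition Zterm_deriv (m : nat) (b : nat -> C) (s : C) (n : nat) : C :=
  sum_n_m (fun k => b k * (- RtoC (ln (INR (m * n + k)))) * cpow_neg (INR (m * n + k)) s)%C 1 m.

Lemma Zterm_dq_sub_deriv (m : nat) (b : nat -> C) (s : C) : exists Cn : nat -> R,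
  forall h n, h <> RtoC 0 -> Cmod h <= 1 ->
    Cmod ((Zterm m b (s + h) n - Zterm m b s n) / h - Zterm_deriv m b s n)%C <= Cmod h * Cn n.
Proof.
  set (T := fun n k => INR (m * n + k)).
  exists (fun n => sum_n_m (fun k => Cmod (b k) * Cmod (cpow_neg (T n k) s) *
                                     (ln (T n k) ^ 2 / 2 * exp (ln (T n k)))) 1 m).
  intros h n Hh0 Hh1.
  assert (Hh : 0 < Cmod h) by now apply Cmod_gt_0.
  set (u := fun k => (- h * RtoC (ln (T n k)))%C).
  assert (E : ((Zterm m b (s + h) n - Zterm m b s n) / h - Zterm_deriv m b s n)%C =
    sum_n_m (fun k => b k * cpow_neg (T n k) s * (cexp (u k) - 1 - u k) / h)%C 1 m).
  { transitivity (/ h * Zterm m b (s + h) n + (- / h) * Zterm m b s n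
                  + (-1) * Zterm_deriv m b s n)%C; [unfold Cdiv; ring|].
    unfold Zterm, Zterm_deriv. rewrite !Cmult_sum_n_m, <- !Cplus_sum_n_m.
    apply sum_n_m_ext; intros k. fold (T n k). unfold u.
    rewrite cpow_neg_add. unfold cpow_neg at 2. match goal with |- ?x = ?y => change (@eq C x y) end. field. exact Hh0. }
  rewrite E, <- (sum_n_m_mult_l (K := R_Ring)).
  apply Cmod_sum_n_m_le; intros k Hk. change (mult ?a ?b) with (a * b).
  assert (HT : 1 <= T n k) by (unfold T; apply (le_INR 1); lia).
  set (L := ln (T n k)). assert (HL : 0 <= L) by now apply ln_nonneg.
  assert (Hu : Cmod (u k) = Cmod h * L).
  { unfold u. rewrite Cmod_mult, Cmod_opp, Cmod_R, Rabs_pos_eq; [reflexivity | exact HL]. }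
  pose proof (Cmod_cexp_sub_1_sub (u k)) as He. rewrite Hu in He.
  assert (He2 : exp (Cmod h * L) <= exp L) by (apply exp_le; nra).
  unfold Cdiv. rewrite !Cmod_mult, Cmod_inv by exact Hh0.
  set (B := Cmod (b k) * Cmod (cpow_neg (T n k) s)).
  assert (HB : 0 <= B) by (apply Rmult_le_pos; apply Cmod_ge_0).
  apply Rle_trans with (B * ((Cmod h * L) ^ 2 / 2 * exp L) * / Cmod h).
  - apply Rmult_le_compat_r; [apply Rlt_le, Rinv_0_lt_compat, Hh|].
    apply Rmult_le_compat_l; [exact HB|]. eapply Rle_trans; [exact He|].
    apply Rmult_le_compat_l; [|exact He2]. pose proof (pow2_ge_0 (Cmod h * L)). lra.
  - right. unfold B. field. lra.
Qed.

Definition Zsum (m : nat) (b : nat -> C) (s : C) : C := series_sum (Zterm m b s).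

Lemma is_series_Zsum (n0 m : nat) (b : nat -> C) (s : C) :
  (0 < m)%nat -> moments_vanish n0 m b -> 2 - INR (S n0) < Re s ->
  is_series (Zterm m b s) (Zsum m b s).
Proof.
  intros Hm Hb Hs.
  destruct (Zterm_bound n0 m b s Hm Hb ltac:(lra)) as [K HK].
  apply is_series_series_sum, (ex_series_of_dominated _ _ (ex_series_div_sq K) HK).
Qed.

Lemma Zsum_ex_derive (n0 m : nat) (b : nat -> C) (s : C) :
  (0 < m)%nat -> moments_vanish n0 m b -> 2 - INR (S n0) < Re s ->
  @ex_derive C_AbsRing C_NormedModule (Zsum m b) s.
Proof.
  intros Hm Hb Hs.
  set (d := Rmin 1 ((Re s + INR (S n0) - 2) / 2)).
  assert (Hd : 0 < d <= 1) by (split; [apply Rmin_pos; lra | apply Rmin_l]).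
  assert (Hd2 : d <= (Re s + INR (S n0) - 2) / 2) by apply Rmin_r.
  destruct (Zterm_dq_bound n0 m b s d Hm Hb Hd ltac:(lra)) as [K HK].
  destruct (Zterm_dq_sub_deriv m b s) as [Cn HCn].
  assert (Hshift : forall h, Cmod h < d -> 2 - INR (S n0) < Re (s + h)).
  { intros h Hh. pose proof (re_le_Cmod h). pose proof (Rle_abs (- Re h)).
    rewrite Rabs_Ropp in *. change (Re (s + h)%C) with (Re s + Re h). lra. }
  destruct (tannery (fun h n => (Zterm m b (s + h) n - Zterm m b s n) / h)%C
              (fun h => (Zsum m b (s + h) - Zsum m b s) / h)%C (Zterm_deriv m b s)
              (fun n => K / INR n ^ 2) Cn d) as [L [_ HL]].
  - apply Hd.
  - apply ex_series_div_sq.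
  - intros h _ Hh. apply is_series_div_sub; apply (is_series_Zsum n0); auto.
  - intros h n Hh0 Hh Hn. apply HK; auto; lra.
  - intros h n Hh0 Hh. apply HCn; auto; lra.
  - exists L. apply is_derive_of_quotients, HL.
Qed.

Lemma ndivisors_pos (m : nat) : (0 < m)%nat -> (1 <= ndivisors m)%nat.
Proof.
  intros Hm. unfold ndivisors.
  assert (Hin : List.In m (List.filter (fun k => Nat.eqb (Nat.modulo m k) 0) (List.seq 1 m))).
  { apply List.filter_In. split; [apply List.in_seq; lia | now rewrite Nat.Div0.mod_same]. }
  destruct (List.filter _ _); [contradiction | simpl; lia].
Qed.

Theorem theorem1 (m : nat) (b : nat -> C) :
  (0 < m)%nat ->
  (forall r : nat, (r < ndivisors m)%nat ->
     sum_n_m (fun k => (b k * RtoC (INR k ^ r))%C) 1 m = RtoC 0) ->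
  exists Z : C -> C,
    (forall s : C, 2 - INR (ndivisors m) < Re s ->
       is_series (Zterm m b s) (Z s)) /\
    (forall s : C, 2 - INR (ndivisors m) < Re s ->
       @ex_derive C_AbsRing C_NormedModule Z s).
Proof.
  intros Hm Hb.
  pose proof (ndivisors_pos m Hm) as Hd.
  destruct (ndivisors m) as [|n0]; [lia|].
  assert (Hmom : moments_vanish n0 m b) by (intros r Hr; apply Hb; lia).
  exists (Zsum m b). split; intros s Hs.
  - exact (is_series_Zsum n0 m b s Hm Hmom Hs).
  - exact (Zsum_ex_derive n0 m b s Hm Hmom Hs).
Qed.
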